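(* Let $\lambda>0$, $M_y,M_z\ge1$, $d_y,d_z>0$, $k_z(m)=(m\bmod M_z)d_z$, $k_y(m)=\lfloor m/M_z\rfloor d_y$ for $m=0,\dots,M_yM_z-1$, and $\tilde\phi_m(\varphi,\theta,r)=k_z(m)\sin\theta+k_y(m)\sin\varphi\cos\theta-\frac{k_y(m)^2+k_z(m)^2}{2r}$. Suppose $K$ users are located at $(\varphi_o,\theta_k,r_k)$, $k=1,\dots,K$, all with the same azimuth $\varphi_o\in[-\pi/2,\pi/2]$, elevations $\theta_k\in[-\pi/2,\pi/2]$ and $r_k>0$. Let $p,q,v\in\{1,\dots,K\}$ satisfy $|\sin\theta_p-\sin\theta_q+\sin\theta_v|<1$; set $\theta_{pqv}=\arcsin(\sin\theta_p-\sin\theta_q+\sin\theta_v)$, and suppose moreover $\left|\frac{\sin\varphi_o}{\cos\theta_{pqv}}(\cos\theta_p-\cos\theta_q+\cos\theta_v)\right|\le1$ and $\frac1{r_p}-\frac1{r_q}+\frac1{r_v}>0$. Define the third-order focal point by $\varphi_{pqv}=\arcsin\left(\frac{\sin\varphi_o\cos\theta_p-\sin\varphi_o\cos\theta_q+\sin\varphi_o\cos\theta_v}{\cos\theta_{pqv}}\right)$ and $r_{pqv}=\left(\frac1{r_p}-\frac1{r_q}+\frac1{r_v}\right)^{-1}$. Then $$\theta_{pqv}=\arcsin(\sin\theta_p-\sin\theta_q+\sin\theta_v),\quad \varphi_{pqv}=\arcsin\left(\frac{\sin\varphi_o}{\cos\theta_{pqv}}(\cos\theta_p-\cos\theta_q+\cos\theta_v)\right),\quad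 r_{pqv}=\left(\frac1{r_p}-\frac1{r_q}+\frac1{r_v}\right)^{-1},$$ and $\tilde\phi_m(\varphi_o,\theta_p,r_p)-\tilde\phi_m(\varphi_o,\theta_q,r_q)+\tilde\phi_m(\varphi_o,\theta_v,r_v)=\tilde\phi_m(\varphi_{pqv},\theta_{pqv},r_{pqv})$ for all $m$; i.e., the third-order distortion is focused at these points.
   Context: Uniform planar array in the $yz$-plane transmitting $x_m[n]=\sum_k e^{-j\frac{2\pi}{\lambda}\tilde\phi_m(\varphi_k,\theta_k,r_k)}s_k[n]$ (Fresnel near-field model); the third-order distortion is the term $x_m|x_m|^2=\sum_{p,q,v}s_ps_q^*s_v\,e^{-j\frac{2\pi}{\lambda}(\tilde\phi_m(p)-\tilde\phi_m(q)+\tilde\phi_m(v))}$, and its focal points are the points whose Fresnel phase equals the alternating phase sum. The paper states the formulas as approximations of the true near-field focal points; within the Fresnel model they are exact. *)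

From Stdlib Require Import Reals Lra Lia.
Open Scope R_scope.

Definition kz (Mz : nat) (dz : R) (m : nat) : R := INR (Nat.modulo m Mz) * dz.
Definition ky (Mz : nat) (dy : R) (m : nat) : R := INR (Nat.div m Mz) * dy.

Definition phit (Mz : nat) (dy dz : R) (m : nat) (ph th r : R) : R :=
  kz Mz dz m * sin th + ky Mz dy m * sin ph * cos th
  - (ky Mz dy m ^ 2 + kz Mz dz m ^ 2) / (2 * r).

Definition theta3 (thp thq thv : R) : R := asin (sin thp - sin thq + sin thv).
Definition phi3 (pho thp thq thv : R) : R :=
  asin ((sin pho * cos thp - sin pho * cos thq + sin pho * cos thv)
        / cos (theta3 thp thq thv)).
Definition r3 (rp rq rv : R) : R := / (/ rp - / rq + / rv).

(* The Fresnel phase phit m (ph, th, r) is affine in the three "features"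
   sin th, sin ph * cos th and 1/r, with coefficients that depend on m only.
   A point whose features are the alternating sums of those of p, q, v
   therefore carries the alternating phase sum for every antenna m, and the
   focal point (theta3, phi3, r3) is built so that its features are exactly
   these sums: arcsin is inverted by sin on [-1, 1], and cos theta3 > 0
   because the sine sum lies in (-1, 1). *)
From Stdlib Require Import Reals Lra.
Open Scope R_scope.

Lemma phit_features (Mz : nat) (dy dz : R) (m : nat) (ph th r : R) :
  phit Mz dy dz m ph th r
  = kz Mz dz m * sin th + ky Mz dy m * (sin ph * cos th)
    - (ky Mz dy m ^ 2 + kz Mz dz m ^ 2) / 2 * / r.
Proof. unfold phit, Rdiv; rewrite Rinv_mult; ring. Qed.

Lemma phit_alternating_sum (Mz : nat) (dy dz : R) (m : nat)
    (ph1 th1 r1 ph2 th2 r2 ph3 th3 r3 ph th r : R) :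
  sin th = sin th1 - sin th2 + sin th3 ->
  sin ph * cos th = sin ph1 * cos th1 - sin ph2 * cos th2 + sin ph3 * cos th3 ->
  / r = / r1 - / r2 + / r3 ->
  phit Mz dy dz m ph1 th1 r1 - phit Mz dy dz m ph2 th2 r2
  + phit Mz dy dz m ph3 th3 r3
  = phit Mz dy dz m ph th r.
Proof. intros Hs Hsc Hr; rewrite !phit_features, Hs, Hsc, Hr; ring. Qed.

Lemma sin_theta3 (thp thq thv : R) :
  Rabs (sin thp - sin thq + sin thv) <= 1 ->
  sin (theta3 thp thq thv) = sin thp - sin thq + sin thv.
Proof. intros H; apply sin_asin; split_Rabs; lra. Qed.

Lemma cos_theta3_gt0 (thp thq thv : R) :
  Rabs (sin thp - sin thq + sin thv) < 1 -> 0 < cos (theta3 thp thq thv).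
Proof.
  intros H.
  assert (Hbound : - (PI / 2) < theta3 thp thq thv < PI / 2)
    by (apply asin_bound_lt; split_Rabs; lra).
  destruct Hbound as [lo hi]; exact (cos_gt_0 _ lo hi).
Qed.

Lemma phi3_asin (pho thp thq thv : R) :
  phi3 pho thp thq thv
  = asin (sin pho / cos (theta3 thp thq thv) * (cos thp - cos thq + cos thv)).
Proof. unfold phi3, Rdiv; f_equal; ring. Qed.

Lemma sin_phi3_cos_theta3 (pho thp thq thv : R) :
  cos (theta3 thp thq thv) <> 0 ->
  Rabs (sin pho / cos (theta3 thp thq thv) * (cos thp - cos thq + cos thv)) <= 1 ->
  sin (phi3 pho thp thq thv) * cos (theta3 thp thq thv)
  = sin pho * cos thp - sin pho * cos thq + sin pho * cos thv.
Proof.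
  intros Hc H; rewrite phi3_asin, sin_asin by (split_Rabs; lra).
  field; exact Hc.
Qed.

(* No sign condition is needed: [/ / x = x] holds for every real x. *)
Lemma inv_r3 (rp rq rv : R) : / r3 rp rq rv = / rp - / rq + / rv.
Proof. apply Rinv_inv. Qed.

Theorem corollary4
  (lambda : R) (My Mz : nat) (dy dz : R) (K : nat)
  (pho : R) (theta r : nat -> R) (p q v : nat) :
  0 < lambda -> (1 <= My)%nat -> (1 <= Mz)%nat -> 0 < dy -> 0 < dz ->
  -(PI/2) <= pho <= PI/2 ->
  (forall k, (1 <= k <= K)%nat -> -(PI/2) <= theta k <= PI/2 /\ 0 < r k) ->
  (1 <= p <= K)%nat -> (1 <= q <= K)%nat -> (1 <= v <= K)%nat ->
  Rabs (sin (theta p) - sin (theta q) + sin (theta v)) < 1 ->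
  Rabs (sin pho / cos (theta3 (theta p) (theta q) (theta v))
        * (cos (theta p) - cos (theta q) + cos (theta v))) <= 1 ->
  0 < / r p - / r q + / r v ->
  theta3 (theta p) (theta q) (theta v)
    = asin (sin (theta p) - sin (theta q) + sin (theta v)) /\
  phi3 pho (theta p) (theta q) (theta v)
    = asin (sin pho / cos (theta3 (theta p) (theta q) (theta v))
            * (cos (theta p) - cos (theta q) + cos (theta v))) /\
  r3 (r p) (r q) (r v) = / (/ r p - / r q + / r v) /\
  (forall m, (m < My * Mz)%nat ->
     phit Mz dy dz m pho (theta p) (r p) - phit Mz dy dz m pho (theta q) (r q)
     + phit Mz dy dz m pho (theta v) (r v)
     = phit Mz dy dz m (phi3 pho (theta p) (theta q) (theta v))
                       (theta3 (theta p) (theta q) (theta v))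
                       (r3 (r p) (r q) (r v))).
Proof.
  intros _ _ _ _ _ _ _ _ _ _ Hsin Hphi _.
  pose proof (cos_theta3_gt0 _ _ _ Hsin) as Hcos.
  split; [reflexivity|]; split; [apply phi3_asin|]; split; [reflexivity|].
  intros m _; apply phit_alternating_sum.
  - apply sin_theta3; lra.
  - apply sin_phi3_cos_theta3; [lra | exact Hphi].
  - apply inv_r3.
Qed.
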